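(* Let $\mathrm{opt}(\mathcal{I}_{\textsf{EVSP}})$ and $\mathrm{opt}(\mathcal{I}_{\textsf{BPP}})$ denote, respectively, the optimal value for the instances $\mathcal{I}_{\textsf{EVSP}}$ and $\mathcal{I}_{\textsf{BPP}}$, where $\mathcal{I}_{\textsf{EVSP}} = f(\mathcal{I}_{\textsf{BPP}})$. Then $\mathrm{opt}(\mathcal{I}_{\textsf{EVSP}}) = 2n - \mathrm{opt}(\mathcal{I}_{\textsf{BPP}})$.
   Context: The electric vehicle sharing problem (EVSP): there is a set of stations, each with a capacity (number of parking spaces) and a number of charging facilities; a fleet of identical electric vehicles with battery capacity $\textsf{L}$ initially located at stations; and a set of customers, each with a set of driving demands $(s^{\text{out}}, t_i, s^{\text{in}}, t_j, \varepsilon)$ (pick-up station, departure time, drop-off station, arrival time, required energy). A demand is fulfilled by a vehicle if the vehicle is at the pick-up station at time $t_i$, its battery energy is at least $\varepsilon$, and there is a free parking space at the drop-off station; the vehicle's energy decreases by $\varepsilon$ and increases only by charging at a charging facility. A customer is served iff all its demands are fulfilled; the objective is to maximize the total rental time $\sum (t_j - t_i)$ over demands of served customers. The one-dimensional bin packing problem (BPP): given items $\mathcal{N} = \{1,\dots,n\}$ with sizes $\ell_i \in (0,1]$, find a partition $\{\mathcal{N}_1,\dots,\mathcal{N}_k\}$ of $\mathcal{N}$ such that the sizes in each part sum to at most $1$ and $k$ (the number of bins) is minimized. The reduction $f$ maps a BPP instance $\mathcal{I}_{\textsf{BPP}}$ to the EVSP instance $\mathcal{I}_{\textsf{EVSP}}$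 with $2n$ customers, each having a single demand: there is a single station $s$ with capacity $n$ and no charging facilities; there are $n$ fully charged vehicles initially at $s$, each with battery capacity $\textsf{L} = 1$; for each item $i \in \mathcal{N}$ there is an item customer with the single demand $(s, 2i, s, 2i+1, \ell_i)$; and there are $n$ dummy customers, each with the single demand $(s, 1, s, 2, \textsf{L})$. Each customer contributes rental time $1$ to the objective, so maximizing total rental time is equivalent to maximizing the number of served customers. *)

From HB Require Import structures.
From mathcomp Require Import all_boot all_order all_algebra.
Set Implicit Arguments. Unset Strict Implicit. Unset Printing Implicit Defensive.
Import Order.TTheory GRing.Theory Num.Theory.

Definition bpp_feasible (R : realDomainType) (n : nat) (l : 'I_n -> R)
    (P : {set {set 'I_n}}) : Prop :=
  partition P [set: 'I_n] /\
  (forall B, B \in P -> (\sum_(i in B) l i <= 1)%R).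

Definition bpp_opt (R : realDomainType) (n : nat) (l : 'I_n -> R) (k : nat) : Prop :=
  (exists P, bpp_feasible l P /\ #|P| = k) /\
  (forall P, bpp_feasible l P -> k <= #|P|).

(* Stations 'I_nS (capacity, number of chargers), vehicles 'I_nV (initial    *)
(* station and energy, battery capacity L), customers 'I_nC, demands 'I_nD;  *)
(* each demand d belongs to customer (owner d) and is                         *)
(* (sout d, tdep d, sin d, tarr d, eps d).  Times are natural numbers.       *)

Record evsp (R : realDomainType) := EVSP {
  nS : nat;
  cap : 'I_nS -> nat;
  nchg : 'I_nS -> nat;
  nV : nat;
  L : R;
  vst : 'I_nV -> 'I_nS;
  ven : 'I_nV -> R;
  nC : nat;
  nD : nat;
  owner : 'I_nD -> 'I_nC;
  sout : 'I_nD -> 'I_nS;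
  tdep : 'I_nD -> nat;
  sin : 'I_nD -> 'I_nS;
  tarr : 'I_nD -> nat;
  eps : 'I_nD -> R
}.

Section EVSPSemantics.
Variables (R : realDomainType) (I : evsp R).
(* a solution: which vehicle (if any) fulfils each demand, and how much     *)
(* energy the vehicle charges at its pick-up station before that demand     *)
Variables (a : 'I_(nD I) -> option 'I_(nV I)) (ch : 'I_(nD I) -> R).

Definition on (v : 'I_(nV I)) (d : 'I_(nD I)) : bool := a d == Some v.

Definition before (d' d : 'I_(nD I)) : bool := tarr d' <= tdep d.

Definition in_use (v : 'I_(nV I)) (t : nat) : Prop :=
  exists d, on v d /\ tdep d <= t < tarr d.

Definition parked (v : 'I_(nV I)) (s : 'I_(nS I)) (t : nat) : bool :=
  [forall d, on v d ==> ~~ (tdep d <= t < tarr d)] &&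
  ( ([forall d, on v d ==> (t < tarr d)] && (vst v == s)) ||
    [exists d, [&& on v d, tarr d <= t, sin d == s &
       [forall d'', (on v d'' && (tarr d'' <= t)) ==> (tarr d'' <= tarr d)]]]).

Definition at_pickup (v : 'I_(nV I)) (d : 'I_(nD I)) : Prop :=
  ((forall d', on v d' -> d' != d -> ~~ before d' d) /\ vst v = sout d) \/
  (exists d', [/\ on v d', d' != d, before d' d, sin d' = sout d &
     forall d'', on v d'' -> d'' != d -> before d'' d -> tarr d'' <= tarr d']).

Definition energy_at (v : 'I_(nV I)) (d : 'I_(nD I)) : R :=
  (ven v - \sum_(d' | on v d' && (d' != d) && before d' d) eps d'
         + \sum_(d' | on v d' && ((d' == d) || before d' d)) ch d')%R.

Definition fulfilled_ok (v : 'I_(nV I)) (d : 'I_(nD I)) : Prop :=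
  [/\
      (forall d', on v d' -> d' != d -> before d d' \/ before d' d),
      at_pickup v d,
      (0 <= ch d)%R /\ ((0 < ch d)%R -> 0 < nchg (sout d)),
      (eps d <= energy_at v d <= L I)%R &
      #|[set w | (w != v) && parked w (sin d) (tarr d)]| < cap (sin d)].

Definition evsp_feasible : Prop :=
  forall d v, a d = Some v -> fulfilled_ok v d.

Definition served (c : 'I_(nC I)) : bool :=
  [forall d, (owner d == c) ==> (a d != None)].

Definition evsp_value : nat :=
  \sum_(c | served c) \sum_(d | owner d == c) (tarr d - tdep d).

End EVSPSemantics.

Definition evsp_opt (R : realDomainType) (I : evsp R) (k : nat) : Prop :=
  (exists a ch, evsp_feasible (I := I) a ch /\ evsp_value (I := I) a = k) /\
  (forall a ch, evsp_feasible (I := I) a ch -> evsp_value (I := I) a <= k).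

(* The reduction f.  Items are 0-indexed here: item i (paper: item i+1) has  *)
(* the demand (s, 2(i+1), s, 2(i+1)+1, l i); customers/demands 'I_(n+n):     *)
(* the first n are item customers, the last n are dummy customers with the   *)
(* demand (s, 1, s, 2, L).  Each customer has exactly one demand.            *)

Definition red_tdep (n : nat) (d : 'I_(n + n)) : nat :=
  match split d with inl i => 2 * i.+1 | inr _ => 1 end.
Definition red_tarr (n : nat) (d : 'I_(n + n)) : nat :=
  match split d with inl i => (2 * i.+1).+1 | inr _ => 2 end.
Definition red_eps (R : realDomainType) (n : nat) (l : 'I_n -> R) (d : 'I_(n + n)) : R :=
  match split d with inl i => l i | inr _ => 1%R end.

Definition reduction (R : realDomainType) (n : nat) (l : 'I_n -> R) : evsp R :=
  @EVSP R 1 (fun _ => n) (fun _ => 0%N)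
        n 1%R (fun _ => ord0) (fun _ => 1%R)
        (n + n) (n + n) id
        (fun _ => ord0) (@red_tdep n) (fun _ => ord0) (@red_tarr n) (red_eps l).

From mathcomp Require Import all_boot all_order all_algebra.
From mathcomp Require Import zify lra.
Import Order.TTheory GRing.Theory Num.Theory.
Set Implicit Arguments. Unset Strict Implicit. Unset Printing Implicit Defensive.

(* With no chargers and a single station with room for every vehicle, a
   vehicle can serve a set of demands iff their rental intervals are disjoint
   and their total energy is at most its initial charge [1]: the rental
   starting last must still find the energy it needs.  In the reduced
   instance all rentals are disjoint except the dummies, which all occupy
   [1, 2], and a dummy drains a full battery.  So a vehicle serving a dummy
   serves nothing else, and the items served by one vehicle fit into a bin.
   If [b] vehicles serve items, [u] items are unserved and [e] dummies are
   served, the items pack into [b + u] bins, [e + b <= n], and the value is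
   [(n - u) + e <= 2n - (b + u)].  Conversely a packing into [k] bins is
   served by [k] vehicles, one per bin, and each of the other [n - k]
   vehicles serves a dummy, for a value of [2n - k]. *)

Section NoCharging.
Variables (R : realDomainType) (I : evsp R).
Implicit Types (a : 'I_(nD I) -> option 'I_(nV I)) (ch : 'I_(nD I) -> R).

Definition load a v : R := (\sum_(d | on a v d) eps d)%R.

Lemma energy_at_uncharged a ch v d :
    (forall d', on a v d' -> ch d' = 0%R) ->
  energy_at a ch v d =
    (ven v - \sum_(d' | on a v d' && (d' != d) && before d' d) eps d')%R.
Proof.
move=> ch0; rewrite /energy_at [X in (_ + X)%R]big1 ?addr0 // => d' /andP[von _].
exact: ch0.
Qed.

Lemma feasible_charge0 a ch v d :
    (forall s : 'I_(nS I), nchg s = 0) -> evsp_feasible a ch -> on a v d ->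
  ch d = 0%R.
Proof.
move=> nochg feas /eqP /feas [_ _ [ch_ge0 ch_pos] _ _].
apply/eqP; rewrite eq_le ch_ge0 andbT leNgt; apply/negP => /ch_pos.
by rewrite nochg.
Qed.

Lemma feasible_load_le a ch v d :
    (forall s : 'I_(nS I), nchg s = 0) -> (forall d : 'I_(nD I), tdep d < tarr d) ->
    evsp_feasible a ch -> on a v d ->
  (load a v <= ven v)%R.
Proof.
move=> nochg dur feas von.
have [m vom tdep_max] := @arg_maxnP _ d (on a v) (fun d => tdep d) von.
have [ordered _ _ /andP[enough _] _] := feas _ _ (eqP vom).
have earlier d' : on a v d' && (d' != m) -> before d' m.
  case/andP=> vod' neq; case: (ordered d' vod' neq) => // m_first.
  have le_dep : tdep d' <= tdep m := tdep_max d' vod'.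
  by have := dur m; move: m_first; rewrite /before; lia.
have all_earlier : (\sum_(d' | on a v d' && (d' != m) && before d' m) eps d' =
           \sum_(d' | on a v d' && (d' != m)) eps d')%R.
  apply: eq_bigl => d'; apply/idP/idP => [/andP[]//|vod'].
  by rewrite vod' (earlier d' vod').
rewrite /load (bigD1 m vom) /=.
move: enough.
rewrite (energy_at_uncharged _ (fun d' => feasible_charge0 nochg feas)) all_earlier.
lra.
Qed.

Lemma at_pickup_single_station a v d :
  (forall s s' : 'I_(nS I), s = s') -> at_pickup a v d.
Proof.
move=> single.
have [|none_before] := boolP [exists d', on a v d' && (d' != d) && before d' d].
  case/existsP=> d0 d0_before; right.
  have [m /andP[/andP[vom m_neq] m_before] tarr_max] :=
    @arg_maxnP _ d0 [pred d' | on a v d' && (d' != d) && before d' d]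
      (fun d' => tarr d') d0_before.
  exists m; split=> // d'' vod'' neq'' before''.
  by apply: tarr_max; rewrite /= vod'' neq'' before''.
left; split=> // d' vod' neq'; apply: contraNN none_before => before'.
by apply/existsP; exists d'; rewrite vod' neq' before'.
Qed.

Lemma card_parked_others_lt a v s t :
  #|[set w | (w != v) && parked a w s t]| < nV I.
Proof.
apply: (@leq_trans #|[set: 'I_(nV I)]|); last by rewrite cardsT card_ord.
apply: proper_card; rewrite properT.
by apply/eqP => /setP /(_ v); rewrite !inE eqxx.
Qed.

Lemma energy_within_load a v d :
    (forall d : 'I_(nD I), 0 <= eps d)%R -> on a v d ->
    (load a v <= ven v)%R -> (ven v <= L I)%R ->
  (eps d <= energy_at a (fun=> 0%R) v d <= L I)%R.
Proof.
move=> eps_ge0 vod load_le ven_le; rewrite energy_at_uncharged //.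
set earlier := (\sum_(d' | _) eps d')%R.
have earlier_ge0 : (0 <= earlier)%R by apply: sumr_ge0.
have : (eps d + earlier <= load a v)%R.
  rewrite /load (bigD1 d vod) lerD2l /= /earlier.
  rewrite [leRHS](bigID (fun d' => before d' d)) /= lerDl.
  by apply: sumr_ge0.
by move=> ?; apply/andP; split; lra.
Qed.

Lemma feasible_of_loads a :
    (forall s s' : 'I_(nS I), s = s') -> (forall s : 'I_(nS I), nV I <= cap s) ->
    (forall d : 'I_(nD I), 0 <= eps d)%R ->
    (forall v : 'I_(nV I), ven v <= L I)%R ->
    (forall v (d d' : 'I_(nD I)),
       on a v d -> on a v d' -> d' != d -> before d d' \/ before d' d) ->
    (forall v : 'I_(nV I), load a v <= ven v)%R ->
  evsp_feasible a (fun=> 0%R).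
Proof.
move=> single roomy eps_ge0 ven_le ordered load_le d v /eqP vod; split.
- by move=> d'; apply: ordered.
- exact: at_pickup_single_station.
- by rewrite ltxx.
- exact: energy_within_load.
- exact: leq_trans (card_parked_others_lt _ _ _ _) (roomy _).
Qed.

End NoCharging.

Lemma card_preim_partition_le (T rT : finType) (f : T -> rT) (D : {set T}) :
  #|preim_partition f D| <= #|f @: D|.
Proof.
have -> : preim_partition f D = (fun y => [set x in D | y == f x]) @: (f @: D).
  by rewrite -imset_comp.
exact: leq_imset_card.
Qed.

Lemma bpp_feasible_preim (R : realDomainType) n (l : 'I_n -> R) (T : eqType)
    (key : 'I_n -> T) :
    (forall x, \sum_(i | key i == key x) l i <= 1)%R ->
  bpp_feasible l (preim_partition key [set: 'I_n]).
Proof.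
move=> class_le1; split; first exact: preim_partitionP.
move=> _ /imsetP[x _ ->]; rewrite (eq_bigl (fun i => key i == key x)) //.
by move=> i; rewrite !inE eq_sym.
Qed.

Lemma card_split_ord m p (A : {set 'I_(m + p)}) :
  #|A| = #|[set i | lshift p i \in A]| + #|[set j | rshift m j \in A]|.
Proof.
rewrite -!sum1_card big_split_ord /=.
by congr (_ + _); apply: eq_bigl => i; rewrite inE.
Qed.

Section ReductionTimes.
Variable n : nat.
Implicit Types (i j : 'I_n).

Lemma red_tdep_lshift i : red_tdep (lshift n i) = 2 * i.+1.
Proof. by rewrite /red_tdep (unsplitK (inl i)). Qed.

Lemma red_tarr_lshift i : red_tarr (lshift n i) = (2 * i.+1).+1.
Proof. by rewrite /red_tarr (unsplitK (inl i)). Qed.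

Lemma red_tdep_rshift j : red_tdep (rshift n j) = 1.
Proof. by rewrite /red_tdep (unsplitK (inr j)). Qed.

Lemma red_tarr_rshift j : red_tarr (rshift n j) = 2.
Proof. by rewrite /red_tarr (unsplitK (inr j)). Qed.

Lemma red_eps_lshift (R : realDomainType) (l : 'I_n -> R) i :
  red_eps l (lshift n i) = l i.
Proof. by rewrite /red_eps (unsplitK (inl i)). Qed.

Lemma red_eps_rshift (R : realDomainType) (l : 'I_n -> R) j :
  red_eps l (rshift n j) = 1%R.
Proof. by rewrite /red_eps (unsplitK (inr j)). Qed.

Lemma red_tarr_tdep (d : 'I_(n + n)) : red_tarr d = (red_tdep d).+1.
Proof.
by case: (split_ordP d) => x ->;
  rewrite ?red_tdep_lshift ?red_tarr_lshift ?red_tdep_rshift ?red_tarr_rshift.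
Qed.

Lemma red_duration (d : 'I_(n + n)) : red_tdep d < red_tarr d.
Proof. by rewrite red_tarr_tdep. Qed.

End ReductionTimes.

Section Reduction.
Variables (R : realDomainType) (n : nat) (l : 'I_n -> R).
Hypothesis l_range : forall i, (0 < l i <= 1)%R.
Local Notation I := (reduction l).
Implicit Types (a : 'I_(nD I) -> option 'I_(nV I)) (ch : 'I_(nD I) -> R).
Implicit Types (v : 'I_(nV I)).

Lemma red_eps_gt0 (d : 'I_(n + n)) : (0 < red_eps l d)%R.
Proof.
case: (split_ordP d) => x ->; rewrite ?red_eps_lshift ?red_eps_rshift //.
by case/andP: (l_range x).
Qed.

Lemma red_item_ordered (i : 'I_n) (d : 'I_(n + n)) :
    d != lshift n i ->
  before (I := I) d (lshift n i) \/ before (I := I) (lshift n i) d.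
Proof.
rewrite /before /=; case: (split_ordP d) => x -> {d};
  rewrite ?red_tdep_lshift ?red_tarr_lshift ?red_tdep_rshift ?red_tarr_rshift.
- rewrite (inj_eq (@lshift_inj _ _)) -(inj_eq val_inj) /=; lia.
- by left; lia.
Qed.

Lemma red_loadE a v :
  load (I := I) a v =
    (\sum_(i | on a v (lshift n i)) l i + \sum_(j | on a v (rshift n j)) 1)%R.
Proof.
rewrite /load big_split_ord /=.
by congr (_ + _)%R; apply: eq_bigr => x _; rewrite ?red_eps_lshift ?red_eps_rshift.
Qed.

Lemma red_load_le1 a ch v :
  evsp_feasible (I := I) a ch -> (load (I := I) a v <= 1)%R.
Proof.
move=> feas; case: (pickP (on a v)) => [d vod | none].
  exact: (feasible_load_le (I := I) _ (@red_duration n) feas vod).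
by rewrite /load big_pred0.
Qed.

Lemma dummy_vehicle_exclusive a ch j v d :
    evsp_feasible (I := I) a ch -> a (rshift n j) = Some v -> on a v d ->
  d = rshift n j.
Proof.
move=> feas /eqP voj vod; apply/eqP/negPn/negP => neq.
have := red_load_le1 v feas; apply/negP; rewrite -ltNge.
rewrite /load (bigD1 (rshift n j) voj) (bigD1 d) /=; last by rewrite vod.
rewrite red_eps_rshift ltrDl; apply: (lt_le_trans (red_eps_gt0 d)).
by rewrite lerDl sumr_ge0 // => d' _; apply/ltW/red_eps_gt0.
Qed.

Lemma item_load_le1 a ch v :
  evsp_feasible (I := I) a ch -> (\sum_(i | on a v (lshift n i)) l i <= 1)%R.
Proof.
move=> /(red_load_le1 v); rewrite red_loadE; apply: le_trans.
by rewrite lerDl sumr_ge0.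
Qed.

Lemma red_value a :
  evsp_value (I := I) a =
    #|[set i | a (lshift n i) != None]| + #|[set j | a (rshift n j) != None]|.
Proof.
rewrite /evsp_value (eq_bigr (fun=> 1)); last first.
  by move=> c _; rewrite /= (big_pred1_eq _ c) red_tarr_tdep subSnn.
rewrite (eq_bigl (fun c => a c != None)) => [|c]; last first.
  apply/forallP/idP => [/(_ c)/implyP|a_c d]; first exact.
  by apply/implyP => /eqP /= ->.
rewrite sum1_card -cardsE card_split_ord.
by congr (_ + _); apply: eq_card => x; rewrite !inE.
Qed.

Lemma packing_of_solution a ch :
    evsp_feasible (I := I) a ch ->
  exists2 P, bpp_feasible l P & evsp_value (I := I) a + #|P| <= 2 * n.
Proof.
move=> feas.
pose key (i : 'I_n) : 'I_n + 'I_n :=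
  if a (lshift n i) is Some v then inl v else inr i.
have key_inl i v : (key i == inl v) = on a v (lshift n i).
  by rewrite /key /on; case: (a _).
have key_inr i y : (key i == inr y) = (a (lshift n i) == None) && (i == y).
  by rewrite /key; case: (a _).
pose P : {set {set 'I_n}} := preim_partition key [set: 'I_n].
have feasP : bpp_feasible l P.
  apply: bpp_feasible_preim => x; case kx: (key x) => [v|y].
    by rewrite (eq_bigl _ _ (fun i => key_inl i v)); apply: item_load_le1 feas.
  have [ax <-] : a (lshift n x) = None /\ x = y.
    by move: kx; rewrite /key; case: (a _) => // -[].
  rewrite (eq_bigl (pred1 x)) ?big_pred1_eq; first by case/andP: (l_range x).
  by move=> i; rewrite key_inr andb_idl // => /eqP->; rewrite ax.
pose SV := [set v : 'I_n | [exists i, on a v (lshift n i)]].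
pose U := [set i | a (lshift n i) == None].
pose D := [set j | a (rshift n j) != None].
have bins_le : #|P| <= #|SV| + #|U|.
  apply: leq_trans (card_preim_partition_le _ _) _.
  apply: (@leq_trans #|inl @: SV :|: inr @: U|).
    apply/subset_leq_card/subsetP => _ /imsetP[i _ ->]; rewrite /key !inE.
    case ai: (a _) => [v|].
      by rewrite imset_f // inE; apply/existsP; exists i; rewrite /on ai.
    by rewrite orbC imset_f // inE ai.
  by apply: leq_trans (leq_card_setU _ _) _; rewrite leq_add ?leq_imset_card.
have dummies_le : #|D| + #|SV| <= n.
  pose dv j := odflt j (a (rshift n j)).
  have dv_inj : {in D &, injective dv}.
    move=> j1 j2; rewrite !inE /dv.
    case a1: (a _) => [v1|] // _; case a2: (a _) => [v2|] // _ /= v12.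
    have v1j2 : on a v1 (rshift n j2) by rewrite /on a2 v12.
    exact/esym/rshift_inj/(dummy_vehicle_exclusive feas a1 v1j2).
  have dv_notSV : dv @: D \subset ~: SV.
    apply/subsetP => _ /imsetP[j jD ->]; move: jD; rewrite inE /dv.
    case aj: (a _) => [v|] // _; rewrite !inE; apply/existsP => -[i].
    move/(dummy_vehicle_exclusive feas aj)/eqP.
    by rewrite eq_lrshift.
  have := subset_leq_card dv_notSV; rewrite card_in_imset //.
  by have := cardsC SV; rewrite card_ord; lia.
have items : #|[set i | a (lshift n i) != None]| + #|U| = n.
  have cardU := cardsC U; rewrite card_ord in cardU.
  rewrite -[RHS]cardU addnC; congr (_ + _).
  by apply: eq_card => i; rewrite !inE.
by exists P => //; rewrite red_value -/D; lia.
Qed.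

Lemma solution_of_packing P :
    bpp_feasible l P ->
  exists2 a, evsp_feasible (I := I) a (fun=> 0%R) &
             evsp_value (I := I) a + #|P| = 2 * n.
Proof.
case=> partP bin_le1; have [/eqP cover_all triv _] := and3P partP.
have in_cover i : i \in cover P by rewrite cover_all inE.
pose X := transversal P [set: 'I_n].
have trX : is_transversal X P [set: 'I_n] := transversalP partP.
pose rep i := transversal_repr i X (pblock P i).
have rep_in i : rep i \in X.
  exact: (repr_mem_transversal trX i (pblock_mem (in_cover i))).
have rep_block i : rep i \in pblock P i.
  exact: (repr_mem_pblock trX i (pblock_mem (in_cover i))).
have rep_eq i v : v \in X -> (rep i == v) = (i \in pblock P v).
  move=> vX; apply/eqP/idP => [<- | iv].
    by rewrite (same_pblock triv (rep_block i)) mem_pblock.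
  by rewrite /rep (same_pblock triv iv) (pblockK trX).
(* each bin is carried by the vehicle named by its representative in [X];
   every other vehicle takes the dummy with its own name *)
pose a (d : 'I_(n + n)) : option 'I_n :=
  match split d with
  | inl i => Some (rep i)
  | inr j => if j \in X then None else Some j
  end.
have a_item i : a (lshift n i) = Some (rep i) by rewrite /a (unsplitK (inl i)).
have a_dummy j : a (rshift n j) = if j \in X then None else Some j.
  by rewrite /a (unsplitK (inr j)).
have dummy_vehicle j v : on (I := I) a v (rshift n j) -> j = v /\ j \notin X.
  by rewrite /on a_dummy; case: ifP => // jX /eqP[].
exists a.
  apply: feasible_of_loads => //.
  - by move=> s s'; rewrite [s]ord1 [s']ord1.
  - by move=> d; apply/ltW/red_eps_gt0.
  - move=> v d d'; case: (split_ordP d) => [i ->|j ->] vod vod' neq.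
      by case: (red_item_ordered neq); [right|left].
    case: (split_ordP d') neq vod' => [i ->|j' ->] neq vod'.
      by rewrite eq_sym in neq; apply: red_item_ordered.
    by rewrite (dummy_vehicle _ _ vod).1 (dummy_vehicle _ _ vod').1 eqxx in neq.
  - move=> v; rewrite red_loadE /=; case vX: (v \in X).
      rewrite [S in (_ + S)%R]big_pred0 ?addr0 => [|j]; last first.
        by apply/negP => /dummy_vehicle[->]; rewrite vX.
      rewrite (eq_bigl (mem (pblock P v))) => [|i]; last first.
        by rewrite /on a_item /= (inj_eq Some_inj) rep_eq.
      exact: bin_le1 (pblock_mem (in_cover v)).
    rewrite big_pred0 => [|i]; last first.
      by rewrite /on a_item /=; apply: contraFF vX => /eqP[<-]; apply: rep_in.
    rewrite add0r (eq_bigl (pred1 v)) ?big_pred1_eq // => j.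
    rewrite /on a_dummy; case: ifP => [jX|_] /=; last by [].
    by apply/esym/eqP => jv; rewrite jv vX in jX.
have cardX := cardsC X; rewrite card_ord (card_transversal trX) in cardX.
have served_items : [set i | a (lshift n i) != None] = [set: 'I_n].
  by apply/setP => i; rewrite !inE a_item.
have served_dummies : [set j | a (rshift n j) != None] = ~: X.
  by apply/setP => j; rewrite !inE a_dummy; case: (j \in X).
rewrite red_value served_items served_dummies cardsT card_ord.
by rewrite -addnA [_ + #|P|]addnC cardX addnn mul2n.
Qed.

End Reduction.

Theorem proposition6 (R : realDomainType) (n : nat) (l : 'I_n -> R)
    (hl : forall i, (0 < l i <= 1)%R) (k : nat) :
  bpp_opt l k -> evsp_opt (reduction l) (2 * n - k).
Proof.
case=> [[P [feasP <-]] minimal]; split.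
  have [a feas value] := solution_of_packing hl feasP.
  by exists a, (fun=> 0%R); split=> //; lia.
move=> a ch feas; have [Q feasQ value] := packing_of_solution hl feas.
by have := minimal Q feasQ; lia.
Qed.
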